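(* Let $d,s,k\in\mathbb{N}$ with $k\ge 2$, $d>2k$ and $1\le s\le \frac{d}{2k}$. Then there is at most one pair $(\phi,\mathbf{c})$, where $\phi=\alpha\phi_1+\beta\phi_2$ with real $\alpha,\beta>0$ and $\mathbf{c}\in\mathbb{R}^d$, such that the quadric $\{\mathbf{x}\in\mathbb{R}^d:\ \phi[\mathbf{x}-\mathbf{c}]=1\}$ passes through all vertices of $P^{d}_{s,2k}$.
   Context: $\mathbf{j}=(1,\dots,1)\in\mathbb{R}^d$, $\chi_S$ the indicator vector of $S\subseteq\{1,\dots,d\}$. $\phi_1[\mathbf{x}]=(\sum_i x_i)^2$, $\phi_2[\mathbf{x}]=\bigl|\mathbf{x}-\frac{\sum_i x_i}{d}\mathbf{j}\bigr|^2$. For $t\in\{s,s+1\}$, $\mathbf{V}^{d}_{t,2k}=\{\chi_S-\frac{t-1}{d-2k}\mathbf{j}:\ |S|=t\}$, and $P^{d}_{s,2k}=\operatorname{conv}(\mathbf{V}^{d}_{s,2k}\cup-\mathbf{V}^{d}_{s,2k}\cup\mathbf{V}^{d}_{s+1,2k}\cup-\mathbf{V}^{d}_{s+1,2k})$, whose vertex set is $\pm\mathbf{V}^{d}_{s,2k}\cup\pm\mathbf{V}^{d}_{s+1,2k}$. *)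

From HB Require Import structures.
From mathcomp Require Import all_boot all_order all_algebra.
From mathcomp Require Import reals.
Set Implicit Arguments. Unset Strict Implicit. Unset Printing Implicit Defensive.
Import Order.TTheory GRing.Theory Num.Theory.
Local Open Scope ring_scope.

Definition jvec (R : realType) (d : nat) : 'rV[R]_d := \row_(i < d) 1.

Definition chi (R : realType) (d : nat) (S : {set 'I_d}) : 'rV[R]_d :=
  \row_(i < d) (if i \in S then 1 else 0).

Definition csum (R : realType) (d : nat) (x : 'rV[R]_d) : R := \sum_(i < d) x 0 i.

Definition phi1 (R : realType) (d : nat) (x : 'rV[R]_d) : R := (csum x) ^+ 2.

Definition phi2 (R : realType) (d : nat) (x : 'rV[R]_d) : R :=
  \sum_(i < d) (x 0 i - csum x / d%:R) ^+ 2.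

Definition phi (R : realType) (d : nat) (a b : R) (x : 'rV[R]_d) : R :=
  a * phi1 x + b * phi2 x.

(* element of V^d_{t,2k} built from S : chi_S - (t-1)/(d-2k) j *)
Definition vpt (R : realType) (d k t : nat) (S : {set 'I_d}) : 'rV[R]_d :=
  chi R S - ((t%:R - 1) / (d%:R - (2 * k)%:R)) *: jvec R d.

(* v is a vertex of P^d_{s,2k}:  v in ±V^d_{s,2k} ∪ ±V^d_{s+1,2k} *)
Definition is_vertex (R : realType) (d s k : nat) (v : 'rV[R]_d) : Prop :=
  exists (t : nat) (S : {set 'I_d}),
    (t = s \/ t = s.+1) /\ #|S| = t /\ (v = vpt R k t S \/ v = - vpt R k t S).

Definition passes_through_vertices (R : realType) (d s k : nat) (a b : R)
  (c : 'rV[R]_d) : Prop :=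
  forall v, is_vertex s k v -> phi a b (v - c) = 1.

From HB Require Import structures.
From mathcomp Require Import all_boot all_order all_algebra.
From mathcomp Require Import reals.
From mathcomp Require Import ring zify.
Import Order.TTheory GRing.Theory Num.Theory.
Local Open Scope ring_scope.

(* Write B for the polar form of phi.  A vertex v and its antipode -v both lie
   on the quadric phi[x - c] = 1, which forces B(v, c) = 0.  Two vertices
   chi_S - lambda j, chi_S' - lambda j with |S| = |S'| then give
   beta (sum_S c - sum_S' c) = 0, so all coordinates of c agree: c = g j.  As
   B(v, j) = alpha d (sum_i v_i) and the coordinate sums of the vertices of
   sizes s and s + 1 differ, g = 0.  With c = 0 the vertices of the two sizes
   give two linear equations in (alpha, beta) with right-hand sides 1; their
   phi_2-coefficients t - t^2/d differ because d <> 2s + 1, and this makes the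
   solution unique. *)

Lemma exists_card_subset (T : finType) (A : {pred T}) (n : nat) :
  (n <= #|A|)%N -> exists2 S : {set T}, S \subset A & #|S| = n.
Proof.
case/card_geqP => s [s_uniq <- sA]; exists [set x in s].
  by apply/subsetP => x; rewrite inE => /sA.
by rewrite cardsE; apply/card_uniqP.
Qed.

Lemma const_of_eq_subset_sums (T : finType) (V : zmodType) (f : T -> V) (t : nat) :
  (0 < t < #|T|)%N ->
  (forall S S' : {set T}, #|S| = t -> #|S'| = t ->
     \sum_(l in S) f l = \sum_(l in S') f l) ->
  forall i j, f i = f j.
Proof.
case/andP=> t_gt0 t_lt eq_sums i j; have [->|neq_ij] := eqVneq i j; first by [].
have [U sU cardU] : exists2 U : {set T}, U \subset ~: [set i; j] & #|U| = t.-1.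
  by apply: exists_card_subset; rewrite cardsCs setCK cards2 neq_ij; lia.
have iU : i \notin U by apply: contraTN isT => /(subsetP sU); rewrite !inE eqxx.
have jU : j \notin U by apply: contraTN isT => /(subsetP sU); rewrite !inE eqxx orbT.
have card_U1 x : x \notin U -> #|x |: U| = t by move=> xU; rewrite cardsU1 xU cardU; lia.
have := eq_sums _ _ (card_U1 _ iU) (card_U1 _ jU).
by rewrite !big_setU1 //=; apply: addIr.
Qed.

Section Quadric.
Context {R : realType} {d : nat}.
Implicit Types (a b r : R) (x y v c : 'rV[R]_d) (S : {set 'I_d}).

Lemma csumD x y : csum (x + y) = csum x + csum y.
Proof. by rewrite /csum -big_split; apply: eq_bigr => i _; rewrite mxE. Qed.

Lemma csumN x : csum (- x) = - csum x.
Proof. by rewrite /csum -sumrN; apply: eq_bigr => i _; rewrite mxE. Qed.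

Lemma csumZ r x : csum (r *: x) = r * csum x.
Proof. by rewrite /csum mulr_sumr; apply: eq_bigr => i _; rewrite mxE. Qed.

Lemma csum_chi S : csum (chi R S) = #|S|%:R.
Proof. by rewrite /csum; under eq_bigr do rewrite mxE; rewrite -big_mkcond sumr_const. Qed.

Lemma csum_jvec : csum (jvec R d) = d%:R.
Proof. by rewrite /csum; under eq_bigr do rewrite mxE; rewrite sumr_const card_ord. Qed.

Lemma exists_card_ord n : (n <= d)%N -> exists S : {set 'I_d}, #|S| = n.
Proof.
by rewrite -{1}(card_ord d) => /exists_card_subset [S _ <-]; exists S.
Qed.

Definition dot x y : R := \sum_(i < d) x 0 i * y 0 i.

Lemma dotC x y : dot x y = dot y x.
Proof. by apply: eq_bigr => i _; rewrite mulrC. Qed.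

Lemma dotDl x y c : dot (x + y) c = dot x c + dot y c.
Proof. by rewrite /dot -big_split; apply: eq_bigr => i _; rewrite mxE mulrDl. Qed.

Lemma dotNl x c : dot (- x) c = - dot x c.
Proof. by rewrite /dot -sumrN; apply: eq_bigr => i _; rewrite mxE mulNr. Qed.

Lemma dotZl r x c : dot (r *: x) c = r * dot x c.
Proof. by rewrite /dot mulr_sumr; apply: eq_bigr => i _; rewrite mxE mulrA. Qed.

Lemma dotDr x y c : dot c (x + y) = dot c x + dot c y.
Proof. by rewrite !(dotC c) dotDl. Qed.

Lemma dotNr x c : dot c (- x) = - dot c x.
Proof. by rewrite !(dotC c) dotNl. Qed.

Lemma dot_jvecl x : dot (jvec R d) x = csum x.
Proof. by apply: eq_bigr => i _; rewrite mxE mul1r. Qed.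

Lemma dot_chil S x : dot (chi R S) x = \sum_(l in S) x 0 l.
Proof.
rewrite /dot [RHS]big_mkcond; apply: eq_bigr => i _; rewrite mxE.
by case: ifP; rewrite ?mul1r ?mul0r.
Qed.

Definition phib a b x y : R :=
  a * csum x * csum y + b * (dot x y - csum x * csum y / d%:R).

Hypothesis d_gt0 : (0 < d)%N.

Let d_neq0 : d%:R != 0 :> R.
Proof. by rewrite pnatr_eq0 -lt0n. Qed.

Lemma phi_phib a b x : phi a b x = phib a b x x.
Proof.
rewrite /phi /phi1 /phib /phi2 -/(csum x) mulrA; congr (_ + b * _).
set m := csum x / d%:R.
have -> : \sum_(i < d) (x 0 i - m) ^+ 2 =
    dot x x + \sum_(i < d) (- (2 * m) * x 0 i) + \sum_(i < d) m ^+ 2.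
  by rewrite -!big_split; apply: eq_bigr => i _ /=; ring.
by rewrite -mulr_sumr sumr_const card_ord -/(csum x) /m; field.
Qed.

Lemma phi_antipodal_diff a b v c :
  phi a b (v - c) - phi a b (- v - c) = - 4 * phib a b v c.
Proof.
rewrite !phi_phib /phib !(csumD, csumN, dotDl, dotDr, dotNl, dotNr) (dotC c v).
by ring.
Qed.

Lemma phib_jvecr a b x r : phib a b x (r *: jvec R d) = a * d%:R * (r * csum x).
Proof. by rewrite /phib dotC dotZl dot_jvecl csumZ csum_jvec; field. Qed.

Variable k : nat.

Definition vshift (t : nat) : R := (t%:R - 1) / (d%:R - (2 * k)%:R).
Definition vsum (t : nat) : R := t%:R - vshift t * d%:R.
Definition vphi2 (t : nat) : R := t%:R - t%:R ^+ 2 / d%:R.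

Lemma vptE t S : vpt R k t S = chi R S - vshift t *: jvec R d.
Proof. by []. Qed.

Lemma csum_vpt t S : #|S| = t -> csum (vpt R k t S) = vsum t.
Proof. by move=> cardS; rewrite vptE csumD csumN csumZ csum_chi csum_jvec cardS. Qed.

Lemma dot_vptl t S x :
  dot (vpt R k t S) x = \sum_(l in S) x 0 l - vshift t * csum x.
Proof. by rewrite vptE dotDl dotNl dotZl dot_chil dot_jvecl. Qed.

Lemma phib_vpt_sub a b t S S' c : #|S| = t -> #|S'| = t ->
  phib a b (vpt R k t S) c - phib a b (vpt R k t S') c =
  b * (\sum_(l in S) c 0 l - \sum_(l in S') c 0 l).
Proof. by move=> cardS cardS'; rewrite /phib !dot_vptl !csum_vpt //; ring. Qed.

Lemma phi_vpt a b t S : #|S| = t ->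
  phi a b (vpt R k t S) = a * vsum t ^+ 2 + b * vphi2 t.
Proof.
move=> cardS; rewrite phi_phib /phib dot_vptl csum_vpt //.
have -> : \sum_(l in S) vpt R k t S 0 l = t%:R * (1 - vshift t).
  rewrite (eq_bigr (fun=> 1 - vshift t)) ?sumr_const ?cardS ?mulr_natl //.
  by move=> l lS; rewrite vptE !mxE lS mulr1.
by rewrite /vsum /vphi2; field.
Qed.

Lemma vsum_succ_neq t : (0 < k)%N -> (2 * k < d)%N -> vsum t.+1 != vsum t.
Proof.
move=> k_gt0 dk; rewrite -subr_eq0.
have dk_neq0 : d%:R - (2 * k)%:R != 0 :> R.
  by rewrite -natrB ?(ltnW dk) // pnatr_eq0 subn_eq0 -ltnNge.
have -> : vsum t.+1 - vsum t = - ((2 * k)%:R / (d%:R - (2 * k)%:R)).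
  by rewrite /vsum /vshift -[t.+1]addn1 natrD; field; rewrite -natrM.
by rewrite oppr_eq0 mulf_neq0 ?invr_eq0 // pnatr_eq0 -lt0n; lia.
Qed.

Lemma vphi2_succ_neq t : (t.*2.+1 != d)%N -> vphi2 t.+1 != vphi2 t.
Proof.
move=> dt; rewrite -subr_eq0.
have -> : vphi2 t.+1 - vphi2 t = (d%:R - (t.*2.+1)%:R) / d%:R.
  by rewrite /vphi2 -[t.+1]addn1 -[t.*2.+1]addn1 -addnn !natrD; field.
by rewrite mulf_neq0 ?invr_eq0 // subr_eq0 eqr_nat eq_sym.
Qed.

Section Centre.
Context {s : nat} {a b : R} {c : 'rV[R]_d}.
Hypotheses (a_neq0 : a != 0) (b_neq0 : b != 0).
Hypothesis quadric_through : passes_through_vertices s k a b c.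

Lemma phib_vertex_centre t S : (t = s \/ t = s.+1) -> #|S| = t ->
  phib a b (vpt R k t S) c = 0.
Proof.
move=> st cardS; have := phi_antipodal_diff a b (vpt R k t S) c.
rewrite !quadric_through; last 2 first.
- by exists t, S; do 2 split => //; right.
- by exists t, S; do 2 split => //; left.
by move/eqP; rewrite subrr eq_sym mulf_eq0 oppr_eq0 pnatr_eq0 => /eqP.
Qed.

Lemma centre_const : (0 < s < d)%N -> c = c 0 (Ordinal d_gt0) *: jvec R d.
Proof.
move=> s_bounds; apply/rowP => i; rewrite !mxE mulr1.
apply: (@const_of_eq_subset_sums _ _ (c 0) s); first by rewrite card_ord.
move=> S S' cardS cardS'; apply/eqP; rewrite -subr_eq0 -(mulrI_eq0 _ (lregP b_neq0)).
by rewrite -(phib_vpt_sub a _ _ _ _ _ cardS cardS') !phib_vertex_centre ?subrr //; left.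
Qed.

Lemma centre_eq0 : (0 < k)%N -> (2 * k < d)%N -> (0 < s < d)%N -> c = 0.
Proof.
move=> k_gt0 dk s_bounds; have c_eq := centre_const s_bounds.
set g := c 0 _ in c_eq.
have [S cardS] : exists S : {set 'I_d}, #|S| = s by apply: exists_card_ord; lia.
have [S1 cardS1] : exists S : {set 'I_d}, #|S| = s.+1 by apply: exists_card_ord; lia.
have g_vsum t S0 : (t = s \/ t = s.+1) -> #|S0| = t -> g * vsum t = 0.
  move=> st cardS0; have := phib_vertex_centre _ _ st cardS0.
  rewrite c_eq phib_jvecr csum_vpt // => /eqP.
  by rewrite (mulrI_eq0 _ (lregP (mulf_neq0 a_neq0 d_neq0))) => /eqP.
have : g * (vsum s.+1 - vsum s) = 0.
  by rewrite mulrBr (g_vsum _ S1) ?(g_vsum _ S) ?subrr //; [left | right].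
move/eqP; rewrite mulf_eq0 subr_eq0 (negPf (vsum_succ_neq _ k_gt0 dk)) orbF.
by move/eqP=> g0; rewrite c_eq g0 scale0r.
Qed.

Lemma vertex_equations : (0 < k)%N -> (2 * k < d)%N -> (0 < s < d)%N ->
  a * vsum s ^+ 2 + b * vphi2 s = 1 /\ a * vsum s.+1 ^+ 2 + b * vphi2 s.+1 = 1.
Proof.
move=> k_gt0 dk s_bounds; have c0 := centre_eq0 k_gt0 dk s_bounds.
have eq1 t S : (t = s \/ t = s.+1) -> #|S| = t -> a * vsum t ^+ 2 + b * vphi2 t = 1.
  move=> st cardS; rewrite -(phi_vpt _ _ _ _ cardS) -(subr0 (vpt R k t S)) -c0.
  by apply: quadric_through; exists t, S; do 2 split => //; left.
have [S cardS] : exists S : {set 'I_d}, #|S| = s by apply: exists_card_ord; lia.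
have [S1 cardS1] : exists S : {set 'I_d}, #|S| = s.+1 by apply: exists_card_ord; lia.
by split; [apply: (eq1 _ S) | apply: (eq1 _ S1)] => //; [left | right].
Qed.

End Centre.
End Quadric.

(* Cramer's rule; the determinant A E - B C cannot vanish, since
   x (A E - B C) = E - B for any solution (x, y). *)
Lemma unit_system_unique {F : idomainType} {A B C E x1 y1 x2 y2 : F} : E != B ->
  x1 * A + y1 * B = 1 -> x1 * C + y1 * E = 1 ->
  x2 * A + y2 * B = 1 -> x2 * C + y2 * E = 1 -> x1 = x2 /\ y1 = y2.
Proof.
move=> EB.
have cramer x y : x * A + y * B = 1 -> x * C + y * E = 1 ->
    x * (A * E - B * C) = E - B /\ y * (A * E - B * C) = A - C.
  move=> e1 e2; split.
    have -> : x * (A * E - B * C) = E * (x * A + y * B) - B * (x * C + y * E) by ring.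
    by rewrite e1 e2 !mulr1.
  have -> : y * (A * E - B * C) = A * (x * C + y * E) - C * (x * A + y * B) by ring.
  by rewrite e1 e2 !mulr1.
move=> e11 e12 e21 e22; have [x1E y1E] := cramer _ _ e11 e12.
have [x2E y2E] := cramer _ _ e21 e22.
have det_neq0 : A * E - B * C != 0.
  by apply: contra EB => /eqP det0; move: x1E; rewrite det0 mulr0 => /esym/eqP; rewrite subr_eq0.
by split; apply: (mulIf det_neq0); rewrite ?x1E ?x2E ?y1E ?y2E.
Qed.

Theorem theorem7 (R : realType) (d s k : nat)
  (hk : (2 <= k)%N) (hd : (2 * k < d)%N) (hs1 : (1 <= s)%N) (hs2 : (2 * k * s <= d)%N)
  (a1 b1 a2 b2 : R) (c1 c2 : 'rV[R]_d) :
  0 < a1 -> 0 < b1 -> 0 < a2 -> 0 < b2 ->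
  passes_through_vertices s k a1 b1 c1 ->
  passes_through_vertices s k a2 b2 c2 ->
  (forall x : 'rV[R]_d, phi a1 b1 x = phi a2 b2 x) /\ c1 = c2.
Proof.
move=> /lt0r_neq0 a1_neq0 /lt0r_neq0 b1_neq0 /lt0r_neq0 a2_neq0 /lt0r_neq0 b2_neq0 h1 h2.
have d_gt0 : (0 < d)%N by lia.
have k_gt0 : (0 < k)%N by lia.
have s_bounds : (0 < s < d)%N by nia.
have d_neq_odd : (s.*2.+1 != d)%N by nia.
have [e11 e12] := vertex_equations d_gt0 k a1_neq0 b1_neq0 h1 k_gt0 hd s_bounds.
have [e21 e22] := vertex_equations d_gt0 k a2_neq0 b2_neq0 h2 k_gt0 hd s_bounds.
have [-> ->] := unit_system_unique (vphi2_succ_neq d_gt0 s d_neq_odd) e11 e12 e21 e22.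
by rewrite (centre_eq0 d_gt0 k a1_neq0 b1_neq0 h1) ?(centre_eq0 d_gt0 k a2_neq0 b2_neq0 h2).
Qed.
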